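(* Let $(\Omega,\mathcal{A})$ be a measurable space with a $\sigma$-finite measure $\mu$, $\pi$ a probability density with respect to $\mu$, and $q_1,\dots,q_D$ transition densities (for each $x$, $q_d(x,\cdot)$ is a probability density with respect to $\mu$). Write $\bar\pi=\pi\otimes\pi$ and $(X,X')\sim\bar\pi$. Assume (A1): for every $d$, $\bar\pi\{(x,x'):q_d(x,x')=0\}=0$; (A2): for every $d$, $\mathbb{E}_{\bar\pi}[|\log q_d(X,X')|]<\infty$. Let $\mathcal{S}$, $\mathcal{E}_{\bar\pi}$, $F$, $\alpha^{\max}$ be as in the context, and let $(\alpha^t)_{t\ge1}$ be defined by $\alpha^1=(1/D,\dots,1/D)$ and $\alpha^{t+1}=F(\alpha^t)$. Then for every $\alpha\in\mathcal{S}$ with $\alpha\ne\alpha^{\max}$ there is a neighborhood $V_\alpha$ of $\alpha$ in $\mathcal{S}$ such that if $\alpha^{t_0}\in V_\alpha$ for some $t_0$, then there exists $t>t_0$ with $\alpha^t\notin V_\alpha$.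
   Context: $\mathcal{S}=\{\alpha\in\mathbb{R}^D:\alpha_d\ge0,\ \sum_d\alpha_d=1\}$; $\mathcal{E}_{\bar\pi}(\alpha)=\mathbb{E}_{\bar\pi}[\log\sum_{d=1}^D\alpha_dq_d(X,X')]$; $F(\alpha)=\big(\mathbb{E}_{\bar\pi}[\alpha_dq_d(X,X')/\sum_{j=1}^D\alpha_jq_j(X,X')]\big)_{1\le d\le D}$. Standing assumption of the paper's setting: $\mathcal{E}_{\bar\pi}$ is strictly concave on $\mathcal{S}$; $\alpha^{\max}$ denotes its unique global maximizer on $\mathcal{S}$. *)

From HB Require Import structures.
From mathcomp Require Import all_boot all_order all_algebra.
From mathcomp Require Import all_classical all_reals all_analysis.
Set Implicit Arguments. Unset Strict Implicit. Unset Printing Implicit Defensive.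
Import Order.TTheory GRing.Theory Num.Theory.
Import numFieldNormedType.Exports.
Local Open Scope classical_set_scope.
Local Open Scope ring_scope.

Section Defs.
Context {d : measure_display} {T : measurableType d} {R : realType}.

Definition simplex (D : nat) : set 'rV[R]_D :=
  [set a | (forall i, 0 <= a ord0 i) /\ \sum_(i < D) a ord0 i = 1].

Definition Epibar (mu : {sigma_finite_measure set T -> \bar R}) (pi : T -> R)
  (f : T * T -> R) : \bar R :=
  (\int[(mu \x mu)%E]_z ((pi z.1 * pi z.2) * f z)%:E)%E.

Definition mixq (D : nat) (q : 'I_D -> T -> T -> R) (a : 'rV[R]_D)
  (z : T * T) : R := \sum_(j < D) a ord0 j * q j z.1 z.2.

(* E_pibar(alpha) = E_pibar[ log sum_d alpha_d q_d(X,X') ] (finite on S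
   under (A1)-(A2); we take its real value) *)
Definition Ecal (mu : {sigma_finite_measure set T -> \bar R}) (pi : T -> R)
  (D : nat) (q : 'I_D -> T -> T -> R) (a : 'rV[R]_D) : R :=
  fine (Epibar mu pi (fun z => ln (mixq q a z))).

Definition Fmap (mu : {sigma_finite_measure set T -> \bar R}) (pi : T -> R)
  (D : nat) (q : 'I_D -> T -> T -> R) (a : 'rV[R]_D) : 'rV[R]_D :=
  \row_(i < D) fine (Epibar mu pi (fun z => a ord0 i * q i z.1 z.2 / mixq q a z)).

(* alpha^1 = (1/D,...,1/D), alpha^{t+1} = F(alpha^t)  (indexed from t = 1) *)
Definition alpha_seq (mu : {sigma_finite_measure set T -> \bar R}) (pi : T -> R)
  (D : nat) (q : 'I_D -> T -> T -> R) (t : nat) : 'rV[R]_D :=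
  iter t.-1 (Fmap mu pi q) (const_mx (D%:R^-1)).

End Defs.

From HB Require Import structures.
From mathcomp Require Import all_boot all_order all_algebra.
From mathcomp Require Import all_classical all_reals all_analysis.
From mathcomp Require Import measurable_realfun lra ring.
Import Order.TTheory GRing.Theory Num.Theory.
Import numFieldNormedType.Exports.
Set Implicit Arguments. Unset Strict Implicit. Unset Printing Implicit Defensive.
Local Open Scope classical_set_scope.
Local Open Scope ring_scope.

(* Strict concavity and maximality give E(a) < E(amax).  Writing
   G_d(a) = E_pibar[q_d / sum_j a_j q_j], one has F(a)_d = a_d G_d(a), and the
   inequality ln t <= t - 1 gives E(b) - E(a) + 1 <= sum_d b_d G_d(a); with
   b = amax this forces G_k(a) > 1 for some k.  If the iterates converged to a,
   Fatou's lemma would give liminf_t G_k(alpha^t) >= G_k(a) > 1, so the positive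
   coordinates alpha^t_k would eventually grow geometrically and could not
   converge.  Hence the iterates leave every small enough ball around a
   infinitely often. *)

Lemma ler_sum_term (R : numDomainType) (I : finType) (F : I -> R) k :
  (forall i, 0 <= F i) -> F k <= \sum_i F i.
Proof. by move=> F0; rewrite (bigD1 k)//= lerDl sumr_ge0. Qed.

Lemma ln_le_subr1 (R : realType) (x : R) : 0 < x -> ln x <= x - 1.
Proof.
by move=> x0; have := expR_ge1Dx (ln x); rewrite lnK ?posrE//; lra.
Qed.

Lemma le_expR_norm_ln (R : realType) (x : R) : 0 <= x -> x <= expR `|ln x|.
Proof.
rewrite le0r => /predU1P[->|x0]; first exact: expR_ge0.
by rewrite -{1}(lnK x0) ler_expR ler_norm.
Qed.

Lemma norm_ln_wsum_le (R : realType) (I : finType) (b c : I -> R) :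
  (forall k, 0 <= b k) -> \sum_k b k = 1 -> (forall k, 0 <= c k) ->
  `|ln (\sum_k b k * c k)| <= \sum_k `|ln (c k)| + \sum_k `|ln (b k)|.
Proof.
move=> b0 b1 c0; set m := \sum_k _; set Sc := \sum_k _; set Sb := \sum_k _.
have Sc0 : 0 <= Sc by exact: sumr_ge0.
have Sb0 : 0 <= Sb by exact: sumr_ge0.
have bc0 k : 0 <= b k * c k by rewrite mulr_ge0.
have [->|m_neq0] := eqVneq m 0; first by rewrite ln0// normr0 addr_ge0.
have [k bck_gt0] : exists k, 0 < b k * c k.
  apply/existsP; apply: contraNT m_neq0; rewrite negb_exists => /forallP bc_le0.
  by rewrite /m big1// => k _; apply/eqP; rewrite eq_le bc0 andbT leNgt bc_le0.
have m_gt0 : 0 < m by apply: (lt_le_trans bck_gt0); exact: ler_sum_term.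
rewrite ler_norml; apply/andP; split.
- have : ln (b k * c k) <= ln m by rewrite ler_ln ?posrE// ler_sum_term.
  have [bk_gt0 ck_gt0] : 0 < b k /\ 0 < c k.
    rewrite !lt0r b0 c0 !andbT; split.
      by apply: contraTneq bck_gt0 => ->; rewrite mul0r ltxx.
    by apply: contraTneq bck_gt0 => ->; rewrite mulr0 ltxx.
  rewrite lnM ?posrE//.
  have : `|ln (b k)| <= Sb by exact: ler_sum_term.
  have : `|ln (c k)| <= Sc by exact: ler_sum_term.
  have := ler_norm (- ln (b k)); have := ler_norm (- ln (c k)); rewrite !normrN.
  lra.
- have : m <= expR Sc.
    rewrite /m -[expR Sc]mul1r -b1 mulr_suml; apply: ler_sum => i _.
    rewrite ler_wpM2l// (le_trans (le_expR_norm_ln (c0 i)))// ler_expR.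
    exact: ler_sum_term.
  by rewrite -ler_ln ?posrE ?expR_gt0// expRK => /le_trans; apply; rewrite lerDl.
Qed.

Lemma measurable_funV (R : realType) : measurable_fun [set: R] (@GRing.inv R).
Proof.
have m0 : measurable [set (0 : R)] := measurable_set1 0.
rewrite -(setUv [set 0]); apply/(measurable_funU _ m0 (measurableC m0)); split.
  exact: measurable_fun_set1.
apply: open_continuous_measurable_fun; first exact/closed_openC/closed_eq.
by move=> x /set_mem /eqP x0; exact: inv_continuous.
Qed.

Lemma ae_le_ge0_integral d (T : measurableType d) (R : realType)
    (mu : {measure set T -> \bar R}) (f g : T -> \bar R) :
  measurable_fun setT f -> measurable_fun setT g -> (forall x, (0 <= g x)%E) ->
  {ae mu, forall x, (f x <= g x)%E} -> (\int[mu]_x f x <= \int[mu]_x g x)%E.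
Proof.
move=> mf mg g0 fg; apply: (@le_trans _ _ (\int[mu]_x f^\+ x)%E).
  rewrite integralE -[leRHS]sube0; apply: leeB => //.
  by apply: integral_ge0 => x _; exact: funeneg_ge0.
have fp0 x : setT x -> (0 <= f^\+ x)%E by move=> _; exact: funepos_ge0.
have mfp := measurable_funepos mf.
apply: ae_ge0_le_integral => //.
by apply: filterS fg => x fgx _; rewrite funeposE ge_max fgx g0.
Qed.

Lemma lte_EFin_exists (R : realType) (r : R) (x : \bar R) :
  (r%:E < x)%E -> exists2 y : R, r < y & (y%:E < x)%E.
Proof.
case: x => [s||] //; last by exists (r + 1); rewrite ?ltey// ltrDl.
by rewrite lte_fin => rs; exists ((r + s) / 2); rewrite ?lte_fin; lra.
Qed.

Lemma limn_einf_ge (R : realType) (u : (\bar R)^nat) x :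
  (forall n, (x <= u n)%E) -> (x <= limn_einf u)%E.
Proof.
move=> ux; rewrite limn_einf_lim; apply: lime_ge; first exact: is_cvg_einfs.
by apply: nearW => n; apply: le_ereal_inf_tmp => _ [k _ <-]; exact: ux.
Qed.

Lemma limn_einf_gt (R : realType) (u : (\bar R)^nat) (y : \bar R) :
  (y < limn_einf u)%E -> \forall n \near \oo, (y <= u n)%E.
Proof.
rewrite limn_einf_lim (cvg_lim _ (@cvg_einfs_sup _ u))//.
move=> /ereal_sup_gt[_ [N _ <-]] yN; exists N => // n /= Nn.
by apply/(le_trans (ltW yN))/ereal_inf_lbound; exists n.
Qed.

Lemma cvg_coord (R : realType) m n (s : nat -> 'M[R]_(m, n)) (a : 'M[R]_(m, n))
    i j :
  s @ \oo --> a -> (fun k => s k i j) @ \oo --> a i j.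
Proof. exact: continuous_cvg _ (@coord_continuous _ _ _ i j a). Qed.

Lemma geometric_growth_not_cvg (R : realType) (x : R^nat) (y l : R) :
  1 < y -> (forall n, 0 < x n) -> (\forall n \near \oo, y * x n <= x n.+1) ->
  ~ x @ \oo --> l.
Proof.
move=> y1 x_gt0 [N _ grow] xl.
have x_incr n : (N <= n)%N -> x n <= x n.+1.
  by move=> Nn; apply: le_trans (grow n Nn); rewrite ler_peMl// ltW.
have xN_le_l : x N <= l.
  have xNl : (fun n => x (n + N)%N) @ \oo --> l by rewrite cvg_shiftn.
  rewrite -(cvg_lim _ xNl)//; apply: (nondecreasing_cvgn_le _ (cvgP _ xNl) 0).
  by apply/nondecreasing_seqP => n; rewrite addSn; apply: x_incr; rewrite leq_addl.
have : y * l <= l.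
  have yxl : (fun n => y * x n) @ \oo --> y * l by apply: cvgM => //; exact: cvg_cst.
  have xSl : (fun n => x n.+1) @ \oo --> l by rewrite cvg_shiftS.
  by apply: (ler_cvg_to yxl xSl); exists N.
have := x_gt0 N; nra.
Qed.

Lemma simplex_has_pos (R : realType) (D : nat) (a : 'rV[R]_D) :
  simplex a -> exists k, 0 < a ord0 k.
Proof.
move=> [a0 a1]; apply/existsP; apply: contraT; rewrite negb_exists => /forallP a_le0.
suff : \sum_k a ord0 k <= 0 by rewrite a1 ler10.
by apply: sumr_le0 => k _; rewrite leNgt a_le0.
Qed.

Lemma simplex_convex (R : realType) (D : nat) (a b : 'rV[R]_D) (s : R) :
  simplex a -> simplex b -> 0 <= s <= 1 -> simplex (s *: a + (1 - s) *: b).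
Proof.
move=> [a0 a1] [b0 b1] /andP[s0 s1]; split=> [i|].
  by rewrite !mxE addr_ge0 ?mulr_ge0 ?subr_ge0.
under eq_bigr do rewrite !mxE.
rewrite big_split -!mulr_sumr a1 b1 /=; lra.
Qed.

Lemma strictly_concave_lt_max (R : realType) (D : nat) (E : 'rV[R]_D -> R) a m :
  (forall a b, simplex a -> simplex b -> a != b -> forall s, 0 < s < 1 ->
     s * E a + (1 - s) * E b < E (s *: a + (1 - s) *: b)) ->
  simplex a -> simplex m -> (forall b, simplex b -> E b <= E m) -> a != m ->
  E a < E m.
Proof.
move=> Econc sa sm m_max a_neq_m.
have half01 : 0 < (2^-1 : R) < 1 by rewrite invr_gt0 ltr0n /= invf_lt1// ltr1n.
have half_le : 0 <= (2^-1 : R) <= 1 by case/andP: half01 => /ltW -> /ltW ->.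
have := Econc _ _ sa sm a_neq_m _ half01.
have := m_max _ (simplex_convex sa sm half_le).
move: (E (2^-1 *: a + _)) => Emid; lra.
Qed.

Section em_iteration.
Context (d : measure_display) (T : measurableType d) (R : realType)
  (mu : {sigma_finite_measure set T -> \bar R})
  (pi : T -> R) (D : nat) (q : 'I_D -> T -> T -> R).
Hypotheses (pi_meas : measurable_fun setT pi) (pi_ge0 : forall x, 0 <= pi x)
  (pi_int1 : (\int[mu]_x (pi x)%:E = 1)%E)
  (q_meas : forall i, measurable_fun setT (fun z : T * T => q i z.1 z.2))
  (q_ge0 : forall i x y, 0 <= q i x y).

Local Notation mm := (mu \x mu)%E.

Definition pibar (z : T * T) : R := pi z.1 * pi z.2.

Lemma pibar_ge0 z : 0 <= pibar z.
Proof. by rewrite mulr_ge0. Qed.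

Lemma measurable_pibar : measurable_fun setT pibar.
Proof.
exact: measurable_funM (measurableT_comp pi_meas measurable_fst)
  (measurableT_comp pi_meas measurable_snd).
Qed.

Lemma measurable_EFin_pibar : measurable_fun setT (fun z => (pibar z)%:E).
Proof. by apply/measurable_EFinP; exact: measurable_pibar. Qed.

Lemma integral_pibar : (\int[mm]_z (pibar z)%:E = 1)%E.
Proof.
rewrite (fubini_tonelli1 (fun z => (pibar z)%:E)); last 2 first.
- exact: measurable_EFin_pibar.
- by move=> z; rewrite lee_fin pibar_ge0.
rewrite -pi_int1; apply: eq_integral => x _; rewrite /fubini_F /pibar /=.
under eq_integral do rewrite EFinM.
by rewrite ge0_integralZl_EFin ?pi_int1 ?mule1//; [move=> y _; rewrite lee_fin|
  exact/measurable_EFinP].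
Qed.

Lemma integrable_pibar : mm.-integrable setT (fun z => (pibar z)%:E).
Proof.
apply/integrableP; split; first exact: measurable_EFin_pibar.
under eq_integral do rewrite gee0_abs ?lee_fin ?pibar_ge0//.
by rewrite integral_pibar ltry.
Qed.

Lemma measurable_mixq (a : 'rV[R]_D) : measurable_fun setT (mixq q a).
Proof.
by apply: measurable_sum => j; apply: measurable_funM => //; exact: measurable_cst.
Qed.

Lemma mixq_ge_term (a : 'rV[R]_D) z j : (forall i, 0 <= a ord0 i) ->
  a ord0 j * q j z.1 z.2 <= mixq q a z.
Proof. by move=> a0; apply: ler_sum_term => i; rewrite mulr_ge0. Qed.

Lemma mixq_ge0 (a : 'rV[R]_D) z : (forall i, 0 <= a ord0 i) -> 0 <= mixq q a z.
Proof. by move=> a0; apply: sumr_ge0 => j _; rewrite mulr_ge0. Qed.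

Lemma mixq_gt0 (a : 'rV[R]_D) z : simplex a -> (forall k, 0 < q k z.1 z.2) ->
  0 < mixq q a z.
Proof.
move=> sa q_gt0; have [k ak_gt0] := simplex_has_pos sa.
by apply: lt_le_trans (mixq_ge_term z k sa.1); rewrite mulr_gt0.
Qed.

Definition pibar_ratio j (a : 'rV[R]_D) (z : T * T) : R :=
  pibar z * (q j z.1 z.2 / mixq q a z).

Lemma pibar_ratio_ge0 j (a : 'rV[R]_D) z : (forall i, 0 <= a ord0 i) ->
  0 <= pibar_ratio j a z.
Proof. by move=> a0; rewrite mulr_ge0 ?pibar_ge0// divr_ge0// mixq_ge0. Qed.

Lemma measurable_pibar_ratio j (a : 'rV[R]_D) :
  measurable_fun setT (fun z => (pibar_ratio j a z)%:E).
Proof.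
apply/measurable_EFinP/measurable_funM; first exact: measurable_pibar.
apply: measurable_funM; first exact: q_meas.
by apply: measurableT_comp; [exact: measurable_funV | exact: measurable_mixq].
Qed.

Definition Gint j (a : 'rV[R]_D) : \bar R := (\int[mm]_z (pibar_ratio j a z)%:E)%E.

Lemma Gint_ge0 j (a : 'rV[R]_D) : (forall i, 0 <= a ord0 i) -> (0 <= Gint j a)%E.
Proof. by move=> a0; apply: integral_ge0 => z _; rewrite lee_fin pibar_ratio_ge0. Qed.

Lemma Epibar_responsibility (a : 'rV[R]_D) j : (forall i, 0 <= a ord0 i) ->
  Epibar mu pi (fun z => a ord0 j * q j z.1 z.2 / mixq q a z)
  = ((a ord0 j)%:E * Gint j a)%E.
Proof.
move=> a0; rewrite /Epibar /Gint -ge0_integralZl_EFin//; last 2 first.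
- by move=> z _; rewrite lee_fin pibar_ratio_ge0.
- exact: measurable_pibar_ratio.
by apply: eq_integral => z _; rewrite -EFinM /pibar_ratio /pibar; congr EFin; ring.
Qed.

Lemma Epibar_responsibility_le1 (a : 'rV[R]_D) j : (forall i, 0 <= a ord0 i) ->
  (Epibar mu pi (fun z => (a ord0 j * q j z.1 z.2 / mixq q a z)%R) <= 1)%E.
Proof.
move=> a0; rewrite -integral_pibar; apply: ge0_le_integral => //.
- by move=> z _; rewrite lee_fin mulr_ge0 ?pibar_ge0// divr_ge0 ?mixq_ge0 ?mulr_ge0.
- rewrite (_ : (fun z => _) = (fun z => (a ord0 j)%:E * (pibar_ratio j a z)%:E)%E).
    exact: emeasurable_funM (measurable_cst _) (measurable_pibar_ratio j a).
  by apply/funext => z; rewrite -EFinM /pibar_ratio /pibar; congr EFin; ring.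
- exact: measurable_EFin_pibar.
move=> z _; rewrite lee_fin ler_piMr ?pibar_ge0//.
have [->|mix_neq0] := eqVneq (mixq q a z) 0; first by rewrite invr0 mulr0.
by rewrite ler_pdivrMr ?lt0r ?mix_neq0 ?mixq_ge0// mul1r mixq_ge_term.
Qed.

Lemma Fmap_EFin (a : 'rV[R]_D) j : (forall i, 0 <= a ord0 i) ->
  (Fmap mu pi q a ord0 j)%:E = ((a ord0 j)%:E * Gint j a)%E.
Proof.
move=> a0; rewrite mxE fineK Epibar_responsibility//.
rewrite ge0_fin_numE ?mule_ge0 ?lee_fin ?Gint_ge0//.
rewrite -Epibar_responsibility//.
by rewrite (le_lt_trans (Epibar_responsibility_le1 _ _))// ltry.
Qed.

Hypothesis A1 : forall i,
  (\int[mm]_(z in [set z : T * T | q i z.1 z.2 = 0%R]) (pi z.1 * pi z.2)%:E = 0)%E.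

Lemma ae_q_gt0 : {ae mm, forall z k, pibar z != 0 -> 0 < q k z.1 z.2}.
Proof.
apply: filter_forall => k.
have mZ : measurable [set z : T * T | q k z.1 z.2 = 0].
  by have := q_meas k measurableT (measurable_set1 0); rewrite setTI.
have /(ae_eq_integral_abs _ mZ) : (\int[mm]_(z in [set z | q k z.1 z.2 = 0%R])
    `|(pibar z)%:E| = 0)%E.
  rewrite -(A1 k); apply: eq_integral => z _.
  by rewrite gee0_abs// lee_fin pibar_ge0.
move=> /(_ (measurable_funS measurableT (subsetT _) measurable_EFin_pibar)).
apply: filterS => z pibar0_on_Z pz; rewrite lt0r q_ge0 andbT.
by apply/eqP => /pibar0_on_Z [] /eqP; rewrite (negbTE pz).
Qed.

Lemma Gint_gt0 (a : 'rV[R]_D) j : (forall i, 0 <= a ord0 i) -> 0 < a ord0 j ->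
  (0 < Gint j a)%E.
Proof.
move=> a0 aj_gt0; rewrite lt0e Gint_ge0// andbT; apply/eqP => G0.
have ratio0 : ae_eq mm setT (fun z => (pibar_ratio j a z)%:E) (cst 0%E).
  apply/(ae_eq_integral_abs _ measurableT (measurable_pibar_ratio j a)).
  rewrite -G0; apply: eq_integral => z _.
  by rewrite gee0_abs// lee_fin pibar_ratio_ge0.
have pibar0 : ae_eq mm setT (fun z => (pibar z)%:E) (cst 0%E).
  apply: filterS2 ratio0 ae_q_gt0 => z ratio0z q_gt0 _; apply/eqP; rewrite eqe.
  apply: contraT => pz; have {}q_gt0 k := q_gt0 k pz.
  have mix_gt0 : 0 < mixq q a z.
    by apply: lt_le_trans (mixq_ge_term z j a0); rewrite mulr_gt0.
  have /eqP := ratio0z I; rewrite eqe gt_eqF//.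
  by rewrite mulr_gt0 ?divr_gt0// lt0r pz pibar_ge0.
have := ae_eq_integral (cst 0%E) _ measurableT measurable_EFin_pibar
  (measurable_cst _) pibar0.
by rewrite integral_pibar integral0 => /eqP; rewrite onee_eq0.
Qed.

(* [alpha_seq] is indexed from 1: [alpha_seq mu pi q n.+1] is [em_iter n]. *)
Definition em_iter n : 'rV[R]_D := iter n (Fmap mu pi q) (const_mx D%:R^-1).

Lemma em_iter_gt0 n i : 0 < em_iter n ord0 i.
Proof.
elim: n i => [|n IHn] i.
  by rewrite mxE invr_gt0 ltr0n (leq_ltn_trans (leq0n i) (ltn_ord i)).
have a0 k : 0 <= em_iter n ord0 k by exact/ltW/IHn.
by rewrite -lte_fin /em_iter iterS Fmap_EFin// mule_gt0 ?lte_fin ?Gint_gt0.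
Qed.

Lemma em_iter_growth n j (y : R) : 0 <= y -> (y%:E <= Gint j (em_iter n))%E ->
  y * em_iter n ord0 j <= em_iter n.+1 ord0 j.
Proof.
move=> y0 yG; have a0 k : 0 <= em_iter n ord0 k by exact/ltW/em_iter_gt0.
rewrite -lee_fin /em_iter iterS Fmap_EFin// mulrC EFinM.
by apply: lee_wpmul2l; rewrite ?lee_fin.
Qed.

Hypothesis A2 : forall i, (Epibar mu pi (fun z => `|ln (q i z.1 z.2)|%R) < +oo)%E.

Lemma integrable_pibar_lnq i :
  mm.-integrable setT (fun z => (pibar z * `|ln (q i z.1 z.2)|)%:E).
Proof.
apply/integrableP; split.
  apply/measurable_EFinP/measurable_funM; first exact: measurable_pibar.
  by apply: measurableT_comp => //; apply: measurableT_comp => //; exact: q_meas.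
under eq_integral do rewrite gee0_abs ?lee_fin ?mulr_ge0 ?pibar_ge0//.
exact: A2.
Qed.

Lemma integrable_pibar_lnmixq (b : 'rV[R]_D) : simplex b ->
  mm.-integrable setT (fun z => (pibar z * ln (mixq q b z))%:E).
Proof.
move=> [b0 b1]; pose Lb := \sum_k `|ln (b ord0 k)|.
pose g z := (\sum_k (pibar z * `|ln (q k z.1 z.2)|)%:E + Lb%:E * (pibar z)%:E)%E.
have int_g : mm.-integrable setT g.
  apply: integrableD => //; last exact: integrableZl integrable_pibar.
  by apply: integrable_sum => // k _; exact: integrable_pibar_lnq.
apply: (le_integrable measurableT _ _ int_g).
  apply/measurable_EFinP/measurable_funM; first exact: measurable_pibar.
  by apply: measurableT_comp => //; exact: measurable_mixq.
move=> z _; rewrite /g sumEFin -EFinM -EFinD !abse_EFin lee_fin.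
rewrite normrM ger0_norm ?pibar_ge0// -mulr_sumr [Lb * _]mulrC -mulrDr.
rewrite [X in _ <= X]ger0_norm ?mulr_ge0 ?addr_ge0 ?sumr_ge0 ?pibar_ge0//.
by rewrite ler_wpM2l ?pibar_ge0// norm_ln_wsum_le.
Qed.

Lemma Ecal_EFin (b : 'rV[R]_D) : simplex b ->
  (Ecal mu pi q b)%:E = (\int[mm]_z (pibar z * ln (mixq q b z))%:E)%E.
Proof.
by move=> sb; rewrite fineK//; exact: integrable_fin_num (integrable_pibar_lnmixq sb).
Qed.

Lemma integral_pibar_mixq_ratio (a b : 'rV[R]_D) :
  (forall i, 0 <= a ord0 i) -> (forall i, 0 <= b ord0 i) ->
  (\int[mm]_z (pibar z * (mixq q b z / mixq q a z))%:E
     = \sum_k (b ord0 k)%:E * Gint k a)%E.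
Proof.
move=> a0 b0; transitivity
    (\int[mm]_z \sum_k ((b ord0 k)%:E * (pibar_ratio k a z)%:E))%E.
  apply: eq_integral => z _; under eq_bigr do rewrite -EFinM.
  rewrite sumEFin /mixq mulr_suml mulr_sumr; congr EFin.
  by apply: eq_bigr => k _; rewrite /pibar_ratio; ring.
rewrite ge0_integral_sum//; last 2 first.
- move=> k; apply: emeasurable_funM; first exact: measurable_cst.
  exact: measurable_pibar_ratio.
- by move=> k z _; rewrite mule_ge0 ?lee_fin ?pibar_ratio_ge0.
apply: eq_bigr => k _; rewrite ge0_integralZl_EFin//.
- by move=> z _; rewrite lee_fin pibar_ratio_ge0.
- exact: measurable_pibar_ratio.
Qed.

Lemma Ecal_gap_le (a b : 'rV[R]_D) : simplex a -> simplex b ->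
  ((Ecal mu pi q b - Ecal mu pi q a + 1)%:E <= \sum_k (b ord0 k)%:E * Gint k a)%E.
Proof.
move=> sa sb; have [a0 b0] := (sa.1, sb.1).
pose h z := pibar z * (ln (mixq q b z) - ln (mixq q a z) + 1).
have int_h : (\int[mm]_z (h z)%:E = (Ecal mu pi q b - Ecal mu pi q a + 1)%:E)%E.
  have int_ba := integrableB measurableT (integrable_pibar_lnmixq sb)
    (integrable_pibar_lnmixq sa).
  rewrite EFinD EFinB !Ecal_EFin// -integral_pibar.
  rewrite -(integralB measurableT (integrable_pibar_lnmixq sb)
    (integrable_pibar_lnmixq sa)).
  rewrite -(integralD measurableT int_ba integrable_pibar).
  by apply: eq_integral => z _; rewrite -!EFinB -EFinD /h; congr EFin; ring.
rewrite -int_h -integral_pibar_mixq_ratio//.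
apply: ae_le_ge0_integral.
- apply/measurable_EFinP/measurable_funM; first exact: measurable_pibar.
  apply: measurable_funD => //; apply: measurable_funB.
    by apply: measurableT_comp => //; exact: measurable_mixq.
  by apply: measurableT_comp => //; exact: measurable_mixq.
- apply/measurable_EFinP/measurable_funM; first exact: measurable_pibar.
  apply: measurable_funM; first exact: measurable_mixq.
  by apply: measurableT_comp; [exact: measurable_funV | exact: measurable_mixq].
- by move=> z; rewrite lee_fin mulr_ge0 ?pibar_ge0// divr_ge0 ?mixq_ge0.
apply: filterS ae_q_gt0 => z q_gt0; rewrite lee_fin /h.
have [->|pz] := eqVneq (pibar z) 0; first by rewrite !mul0r.
have mixa_gt0 := mixq_gt0 sa (q_gt0 ^~ pz).
have mixb_gt0 := mixq_gt0 sb (q_gt0 ^~ pz).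
rewrite ler_wpM2l ?pibar_ge0//.
have := ln_le_subr1 (divr_gt0 mixb_gt0 mixa_gt0).
by rewrite lnM ?posrE ?invr_gt0// lnV ?posrE//; lra.
Qed.

Lemma exists_Gint_gt1 (a b : 'rV[R]_D) : simplex a -> simplex b ->
  Ecal mu pi q a < Ecal mu pi q b -> exists k, (1 < Gint k a)%E.
Proof.
move=> sa sb Eab; apply: contrapT => /forallNP G_le1.
have : (\sum_k (b ord0 k)%:E * Gint k a <= \sum_k (b ord0 k)%:E)%E.
  apply: lee_sum => k _.
  rewrite -[leRHS]mule1 lee_wpmul2l ?lee_fin ?sb.1//.
  by rewrite leNgt; apply/negP; exact: G_le1.
rewrite sumEFin sb.2 => /(le_trans (Ecal_gap_le sa sb)).
by rewrite lee_fin; lra.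
Qed.

Lemma Gint_le_limn_einf (s : nat -> 'rV[R]_D) (a : 'rV[R]_D) j :
  (forall n i, 0 <= s n ord0 i) -> (forall i, 0 <= a ord0 i) -> s @ \oo --> a ->
  (Gint j a <= limn_einf (fun n => Gint j (s n)))%E.
Proof.
move=> s0 a0 sa; pose f n z := (pibar_ratio j (s n) z)%:E.
have f0 n z : setT z -> (0 <= f n z)%E by move=> _; rewrite lee_fin pibar_ratio_ge0.
apply: le_trans (fatou _ measurableT (fun n => measurable_pibar_ratio j (s n)) f0).
have m_liminf : measurable_fun setT (fun z => limn_einf (f ^~ z)).
  rewrite (_ : (fun z => _) = (fun z => - limn_esup ((fun n z => - f n z)%E ^~ z))%E).
    apply: measurableT_comp => //; apply: measurable_fun_limn_esup => n.
    exact: measurableT_comp (measurable_pibar_ratio j (s n)).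
  apply/funext => z; rewrite -limn_einfN; congr limn_einf.
  by apply/funext => n /=; rewrite opprK.
apply: ge0_le_integral => //.
- by move=> z _; rewrite lee_fin pibar_ratio_ge0.
- exact: measurable_pibar_ratio.
move=> z _; have [mix0|mix_neq0] := eqVneq (mixq q a z) 0.
  by rewrite /pibar_ratio mix0 invr0 !mulr0; apply: limn_einf_ge => n; exact: f0.
suff /cvg_limn_einf_sup[-> _] : f ^~ z @ \oo --> (pibar_ratio j a z)%:E by [].
apply: cvg_EFin; first exact: nearW.
apply: cvgM; first exact: cvg_cst.
apply: cvgM; first exact: cvg_cst.
apply: cvgV => //; apply: cvg_big => //; first exact: add_continuous.
by move=> i _; apply: cvgM; [exact: cvg_coord | exact: cvg_cst].
Qed.

Lemma em_iter_not_cvg (a b : 'rV[R]_D) : simplex a -> simplex b ->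
  Ecal mu pi q a < Ecal mu pi q b -> ~ em_iter @ \oo --> a.
Proof.
move=> sa sb Eab iter_a.
have [k Gk_gt1] := exists_Gint_gt1 sa sb Eab.
have [y y_gt1 yG] := lte_EFin_exists Gk_gt1.
have iter_ge0 n i : 0 <= em_iter n ord0 i by exact/ltW/em_iter_gt0.
have G_liminf := Gint_le_limn_einf k iter_ge0 sa.1 iter_a.
apply: (@geometric_growth_not_cvg _ (fun n => em_iter n ord0 k) y (a ord0 k) y_gt1).
- by move=> n; exact: em_iter_gt0.
- have := limn_einf_gt (lt_le_trans yG G_liminf); apply: filterS => n yGn.
  by apply: em_iter_growth yGn; rewrite (le_trans ler01)// ltW.
- exact: cvg_coord.
Qed.

End em_iteration.

Theorem proposition4p2 (d : measure_display) (T : measurableType d) (R : realType)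
  (mu : {sigma_finite_measure set T -> \bar R})
  (pi : T -> R) (D : nat) (q : 'I_D -> T -> T -> R)
  (* pi is a probability density w.r.t. mu *)
  (pi_meas : measurable_fun setT pi)
  (pi_ge0 : forall x, 0 <= pi x)
  (pi_int1 : (\int[mu]_x (pi x)%:E = 1)%E)
  (* each q_d is a transition density w.r.t. mu *)
  (q_meas : forall i, measurable_fun setT (fun z : T * T => q i z.1 z.2))
  (q_ge0 : forall i x y, 0 <= q i x y)
  (q_int1 : forall i x, (\int[mu]_y (q i x y)%:E = 1)%E)
  (* (A1) *)
  (A1 : forall i, (\int[(mu \x mu)%E]_(z in [set z : T * T | q i z.1 z.2 = 0%R])
                     (pi z.1 * pi z.2)%:E = 0)%E)
  (* (A2) *)
  (A2 : forall i, (Epibar mu pi (fun z => `|ln (q i z.1 z.2)|%R) < +oo)%E)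
  (* standing assumption: E_pibar strictly concave on S *)
  (Econc : forall a b : 'rV[R]_D, simplex a -> simplex b -> a != b ->
     forall s : R, 0 < s < 1 ->
       s * Ecal mu pi q a + (1 - s) * Ecal mu pi q b
         < Ecal mu pi q (s *: a + (1 - s) *: b))
  (* amax is the (unique) global maximizer of E_pibar on S *)
  (amax : 'rV[R]_D) (amax_S : simplex amax)
  (amax_max : forall a, simplex a -> Ecal mu pi q a <= Ecal mu pi q amax) :
  forall a : 'rV[R]_D, simplex a -> a != amax ->
    exists V : set 'rV[R]_D,
      (exists U : set 'rV[R]_D, open U /\ U a /\ V = U `&` @simplex R D) /\
      forall t0 : nat, (1 <= t0)%N -> V (alpha_seq mu pi q t0) ->
        exists t : nat, (t0 < t)%N /\ ~ V (alpha_seq mu pi q t).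
Proof.
move=> a sa a_neq_amax.
have Ea_lt := strictly_concave_lt_max Econc sa amax_S amax_max a_neq_amax.
have not_cvg := em_iter_not_cvg pi_meas pi_ge0 pi_int1 q_meas q_ge0 A1 A2
  sa amax_S Ea_lt.
have [e e_gt0 far] : exists2 e : R, 0 < e &
    forall N, exists2 n, (N <= n)%N & ~ ball a e (em_iter mu pi q n).
  have /existsNP[e /not_implyP[e_gt0 not_near]] :
      ~ (forall e : R, 0 < e -> \forall n \near \oo, ball a e (em_iter mu pi q n)).
    by move/cvg_ballP.
  exists e => // N; apply: contrapT => no_far; apply: not_near.
  by exists N => // n /= Nn; apply: contrapT => not_ball; apply: no_far; exists n.
exists (ball a e `&` @simplex R D); split.
  by exists (ball a e); split; [exact: ball_open | split; [exact: ballxx |]].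
move=> t0 _ _; have [n t0n far_n] := far t0.
by exists n.+1; split => // -[/far_n].
Qed.
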